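(* In the setting described in the context, the elements $\exp(t_1),\dots,\exp(t_n)$ together with the elements $t^*(g\otimes g')=\exp\bigl(t(g\otimes g')\bigr)$, where $(g,g')$ ranges over pairs of elements of $\mathcal G(\overline{\mathbb{Q}\{\boldsymbol{X}\}})\setminus\{1\}$, freely generate a (free) abelian subgroup of the multiplicative group $\mathcal G(\overline{\mathbb{Q}[T]})$; that is, if $e_1,\dots,e_n,d_1,\dots,d_m\in\mathbb{Z}$ and $(g_1,g_1'),\dots,(g_m,g_m')$ are pairwise distinct pairs in $\mathcal G(\overline{\mathbb{Q}\{\boldsymbol{X}\}})\setminus\{1\}$ with $\exp(t_1)^{e_1}\cdots\exp(t_n)^{e_n}t^*(g_1\otimes g_1')^{d_1}\cdots t^*(g_m\otimes g_m')^{d_m}=1$, then all $e_i$ and $d_j$ are zero.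
   Context: Let $\boldsymbol{X}=\{X_1,\dots,X_n\}$ and let $\mathbb{Q}\{\boldsymbol{X}\}$ be the free non-associative algebra over $\mathbb{Q}$ on $\boldsymbol{X}$, made into a (non-associative) Hopf algebra by declaring each $X_i$ primitive ($\Delta X_i=X_i\otimes1+1\otimes X_i$, $\Delta$ multiplicative, counit $\epsilon$). Let $\overline{\mathbb{Q}\{\boldsymbol{X}\}}$ be its completion with respect to degree (non-associative formal power series), with the coproduct extended to the completed tensor product. $\mathcal G(H)$ denotes the set of group-like elements, i.e. $g$ with $\Delta(g)=g\otimes g$ and $\epsilon(g)=1$. Let $m(\boldsymbol{X})$ be the set of non-associative monomials in $\boldsymbol{X}$ of degree $\ge1$, and $T$ the set of formal symbols $\{t_1,\dots,t_n\}\sqcup\{t(m_1,m_2)\mid m_1,m_2\in m(\boldsymbol{X})\}$, graded by $|t_i|=1$, $|t(m_1,m_2)|=|m_1|+|m_2|$. $\mathbb{Q}[T]$ is the commutative associative polynomial algebra on $T$, a Hopf algebra with all elements of $T$ primitive, and $\overline{\mathbb{Q}[T]}$ its completion with respect to degree. Let $t$ be the linear map from $\mathbb{Q}\{\boldsymbol{X}\}\otimes\mathbb{Q}\{\boldsymbol{X}\}$ to the span of $T$ given by $t(m_1\otimes m_2)=t(m_1,m_2)$ for $m_1,m_2\in m(\boldsymbol{X})$ and $t(m_1\otimes1)=t(1\otimes m_2)=t(1\otimes1)=0$, extended to the degree completions. For $g,g'$ group-like, $t^*(g\otimes g')$ denotes $\exp(t(g\otimes g'))\in\overline{\mathbb{Q}[T]}$,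 where $\exp$ is the usual exponential series. *)

From HB Require Import structures.
From mathcomp Require Import all_boot all_algebra.
From mathcomp Require Import finmap multiset.

Set Implicit Arguments.
Unset Strict Implicit.
Unset Printing Implicit Defensive.

Import GRing.Theory.

(* Non-associative monomials of degree >= 1 in X_1..X_n (m(X)).        *)
(* The empty monomial 1 is represented by [None] in [option (nmono n)] *)
Inductive nmono (n : nat) : Type :=
| Leaf of 'I_n
| Node of nmono n & nmono n.

Arguments Leaf {n}.
Arguments Node {n}.

Section NmonoCount.
Variable n : nat.

Fixpoint enc_nmono (a : nmono n) : GenTree.tree nat :=
  match a with
  | Leaf i => GenTree.Leaf (nat_of_ord i)
  | Node a b => GenTree.Node 0 [:: enc_nmono a; enc_nmono b]
  end.

Fixpoint dec_nmono (t : GenTree.tree nat) : option (nmono n) :=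
  match t with
  | GenTree.Leaf k => omap Leaf (insub k)
  | GenTree.Node _ [:: ta; tb] =>
      match dec_nmono ta, dec_nmono tb with
      | Some a, Some b => Some (Node a b)
      | _, _ => None
      end
  | _ => None
  end.

Lemma enc_nmonoK : pcancel enc_nmono dec_nmono.
Proof.
elim=> [i|a IHa b IHb] /=; first by rewrite valK.
by rewrite IHa IHb.
Qed.

HB.instance Definition _ := Countable.copy (nmono n) (pcan_type enc_nmonoK).
End NmonoCount.

Fixpoint mdeg n (a : nmono n) : nat :=
  match a with Leaf _ => 1 | Node a b => mdeg a + mdeg b end.
Definition odeg n (u : option (nmono n)) : nat :=
  if u is Some a then mdeg a else 0.

Fixpoint monos_aux n (fuel k : nat) : seq (nmono n) :=
  match fuel with
  | 0 => [::]
  | f.+1 =>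
      if k == 1 then [seq Leaf i | i <- enum 'I_n]
      else flatten [seq [seq Node a b | a <- monos_aux n f j,
                                       b <- monos_aux n f (k - j)]
                   | j <- iota 1 k.-1]
  end.
Definition monos n k : seq (nmono n) := monos_aux n k k.
Definition omonos n k : seq (option (nmono n)) :=
  if k == 0 then [:: None] else [seq Some a | a <- monos n k].

(* Completion of Q{X}: non-associative formal power series, i.e.      *)
(* arbitrary coefficient functions on {1} u m(X).                      *)
Definition QX n := option (nmono n) -> rat.
Definition QX1 n : QX n := fun u => if u is None then 1%R else 0%R.
Arguments QX1 n : clear implicits.

(* completed tensor product Q{X} (x) Q{X} *)
Definition QXX n := (option (nmono n) * option (nmono n))%type -> rat.

(* all factorisations u = u1 * u2 in the (unital) magma of monomials *)
Definition msplits n (u : option (nmono n)) :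
    seq (option (nmono n) * option (nmono n)) :=
  match u with
  | None => [:: (None, None)]
  | Some (Leaf _) => [:: (None, u); (u, None)]
  | Some (Node a b) => [:: (None, u); (u, None); (Some a, Some b)]
  end.

(* multiplication of the (completed) tensor product algebra:
   (u1 (x) v1)(u2 (x) v2) = u1 u2 (x) v1 v2 *)
Definition tensmul n (F G : QXX n) : QXX n := fun uv =>
  (\sum_(p <- msplits uv.1) \sum_(q <- msplits uv.2)
     F (p.1, q.1) * G (p.2, q.2))%R.

(* coproduct of a monomial: multiplicative, X_i primitive *)
Fixpoint Delta_mono n (a : nmono n) : QXX n :=
  match a with
  | Leaf i => fun uv =>
      match uv with
      | (Some (Leaf j), None) => ((i == j)%:R)%R
      | (None, Some (Leaf j)) => ((i == j)%:R)%R
      | _ => 0%R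
      end
  | Node a b => tensmul (Delta_mono a) (Delta_mono b)
  end.

Definition Delta_omono n (w : option (nmono n)) : QXX n :=
  match w with
  | None => fun uv => if uv is (None, None) then 1%R else 0%R
  | Some a => Delta_mono a
  end.

(* coproduct extended to the completion: Delta(f) = sum_w f(w) Delta(w).
   Delta(w) is homogeneous of degree |w|, so only the w of degree
   |u|+|v| contribute to the coefficient of u (x) v. *)
Definition Delta n (f : QX n) : QXX n := fun uv =>
  (\sum_(w <- omonos n (odeg uv.1 + odeg uv.2)) f w * Delta_omono w uv)%R.

Definition counit n (f : QX n) : rat := f None.

Definition grouplike n (g : QX n) : Prop :=
  counit g = 1%R /\ forall u v, Delta g (u, v) = (g u * g v)%R.

Definition tens n (g g' : QX n) : QXX n := fun uv => (g uv.1 * g' uv.2)%R.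

(* The alphabet T = {t_1..t_n} u {t(m1,m2) | m1,m2 in m(X)} and the    *)
(* completion of the commutative polynomial algebra Q[T]: arbitrary    *)
(* coefficient functions on commutative monomials (multisets over T).  *)
Definition tsym n : countType := ('I_n + (nmono n * nmono n))%type.

Local Open Scope mset_scope.

Definition QT n := {mset tsym n} -> rat.

Definition QT1 n : QT n := fun mu => ((mu == mset0)%:R)%R.
Arguments QT1 n : clear implicits.

Fixpoint subseqs (T : Type) (s : seq T) : seq (seq T) :=
  match s with
  | [::] => [:: [::]]
  | x :: s' => subseqs s' ++ [seq x :: l | l <- subseqs s']
  end.

Definition submsets (K : choiceType) (mu : {mset K}) : seq {mset K} :=
  undup [seq seq_mset l | l <- subseqs (enum_mset mu)].

Definition QTmul n (f g : QT n) : QT n := fun mu =>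
  (\sum_(nu <- submsets mu) f nu * g (mu `\` nu))%R.

Definition QTexpn n (f : QT n) (k : nat) : QT n := iter k (QTmul f) (QT1 n).

Fixpoint QTinv_aux n (f : QT n) (fuel : nat) (mu : {mset tsym n}) : rat :=
  match fuel with
  | 0 => if mu == mset0 then ((f mset0)^-1)%R else 0%R
  | k.+1 =>
      if mu == mset0 then ((f mset0)^-1)%R
      else (- (f mset0)^-1 *
            \sum_(nu <- submsets mu | nu != mset0)
               f nu * QTinv_aux f k (mu `\` nu))%R
  end.
Definition QTinv n (f : QT n) : QT n := fun mu => QTinv_aux f (size mu) mu.

Definition QTzpow n (f : QT n) (d : int) : QT n :=
  match d with
  | Posz k => QTexpn f k
  | Negz k => QTexpn (QTinv f) k.+1
  end.

(* exponential of a series without constant term: on a monomial with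
   k letters only the powers L^j, j <= k, contribute *)
Definition QTexp n (L : QT n) : QT n := fun mu =>
  (\sum_(j < (size mu).+1) QTexpn L j mu / (j`!)%:R)%R.

Definition tvar n (i : 'I_n) : QT n :=
  fun mu => ((mu == [mset (inl i : tsym n)])%:R)%R.

(* the linear map t : Q{X}^ (x) Q{X}^ -> span(T)^ (completed),
   t(m1 (x) m2) = t(m1,m2), t(m (x) 1) = t(1 (x) m) = t(1 (x) 1) = 0 *)
Definition tlin n (F : QXX n) : QT n := fun mu =>
  match enum_mset mu with
  | [:: inr (m1, m2)] => F (Some m1, Some m2)
  | _ => 0%R
  end.

Definition tstar n (g g' : QX n) : QT n := QTexp (tlin (tens g g')).

(* Every factor of the product has constant term 1, so the coefficient of a
   single letter of T in the product is the sum of its coefficients in the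
   factors: e_i for t_i, and d_j (g_j - 1)(u) (g'_j - 1)(v) for t(u, v).
   Hence e_i = 0 and sum_j d_j (g_j - 1) (x) (g'_j - 1) = 0.  Applying the
   coproduct to a relation sum_j a_j (g_j - 1) = 0 between group-like elements
   yields sum_j a_j (g_j(u) - g_k(u)) (g_j - 1) = 0, which removes the k-th
   term.  By induction on m, a nonzero d_j would then force
   (g_j, g'_j) = (g_k, g'_k), and a single term d (g - 1) (x) (g' - 1) with
   g, g' <> 1 vanishes only for d = 0. *)

From mathcomp Require Import all_boot all_algebra.
From mathcomp Require Import finmap multiset ring.
From Stdlib Require Import Classical FunctionalExtensionality.
Set Implicit Arguments.
Unset Strict Implicit.
Unset Printing Implicit Defensive.

Import GRing.Theory.
Local Open Scope ring_scope.
Local Open Scope mset_scope.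

Section Multisets.
Variable K : choiceType.

Lemma mset1_neq0 (x : K) : [mset x] != mset0.
Proof. by rewrite -size_mset_eq0 enum_msetn. Qed.

Lemma mset1_eq (x y : K) : ([mset x] == [mset y]) = (x == y).
Proof. exact/inj_eq/msetn_inj. Qed.

Lemma seq_mset_nil : seq_mset [::] = mset0 :> {mset K}.
Proof. by apply/msetP => a; rewrite mset_seqE mset0E. Qed.

Lemma seq_mset1 (x : K) : seq_mset [:: x] = [mset x].
Proof.
by apply/msetP => a; rewrite mset_seqE msetnE /= addn0 eq_sym; case: eqP.
Qed.

Lemma submsets0 : submsets mset0 = [:: mset0 : {mset K}].
Proof. by rewrite /submsets enum_mset0 /= seq_mset_nil. Qed.

Lemma submsets1 (x : K) : submsets [mset x] = [:: mset0; [mset x]].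
Proof.
rewrite /submsets enum_msetn /= seq_mset_nil seq_mset1 /= inE eq_sym.
by rewrite (negbTE (mset1_neq0 x)).
Qed.

End Multisets.

Section PowerSeriesCoefficients.
Variable n : nat.
Implicit Types (f g L : QT n) (x : tsym n) (F : QXX n).

Lemma QT1_coef0 : QT1 n mset0 = 1.
Proof. by rewrite /QT1 eqxx. Qed.

Lemma QT1_coef1 x : QT1 n [mset x] = 0.
Proof. by rewrite /QT1 (negbTE (mset1_neq0 x)). Qed.

Lemma QTmul_coef0 f g : QTmul f g mset0 = f mset0 * g mset0.
Proof. by rewrite /QTmul submsets0 big_seq1 msetB0. Qed.

Lemma QTmul_coef1 f g x :
  QTmul f g [mset x] = f mset0 * g [mset x] + f [mset x] * g mset0.
Proof. by rewrite /QTmul submsets1 big_cons big_seq1 msetB0 msetBxx. Qed.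

Section Unipotent.
Variable f : QT n.
Hypothesis f0 : f mset0 = 1.

Lemma QTexpn_coef0 k : QTexpn f k mset0 = 1.
Proof.
elim: k => [|k IH]; first exact: QT1_coef0.
by rewrite /QTexpn iterS -/(QTexpn f k) QTmul_coef0 f0 IH mulr1.
Qed.

Lemma QTexpn_coef1 k x : QTexpn f k [mset x] = k%:R * f [mset x].
Proof.
elim: k => [|k IH]; first by rewrite mul0r; exact: QT1_coef1.
rewrite /QTexpn iterS -/(QTexpn f k) QTmul_coef1 IH f0 QTexpn_coef0 mulrSr.
by ring.
Qed.

Lemma QTinv_coef0 : QTinv f mset0 = 1.
Proof. by rewrite /QTinv size_mset0 /= eqxx f0 invr1. Qed.

Lemma QTinv_coef1 x : QTinv f [mset x] = - f [mset x].
Proof.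
rewrite /QTinv enum_msetn /= (negbTE (mset1_neq0 x)) submsets1.
rewrite big_cons eqxx /= big_cons big_nil (negbTE (mset1_neq0 x)) msetBxx.
by rewrite eqxx f0 invr1 addr0 mulr1 mulN1r.
Qed.

End Unipotent.

Lemma QTzpow_coef0 f c : f mset0 = 1 -> QTzpow f c mset0 = 1.
Proof.
by move=> f0; case: c => k; apply: QTexpn_coef0; rewrite ?QTinv_coef0.
Qed.

Lemma QTzpow_coef1 f c x : f mset0 = 1 ->
  QTzpow f c [mset x] = c%:~R * f [mset x].
Proof.
move=> f0; case: c => k; rewrite /QTzpow QTexpn_coef1 ?QTinv_coef0 //.
by rewrite QTinv_coef1 // NegzE mulrNz mulrN mulNr.
Qed.

Lemma QTexp_coef0 L : QTexp L mset0 = 1.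
Proof. by rewrite /QTexp size_mset0 big_ord1 /= QT1_coef0 divr1. Qed.

Lemma QTexp_coef1 L x : L mset0 = 0 -> QTexp L [mset x] = L [mset x].
Proof.
move=> L0; rewrite /QTexp enum_msetn !big_ord_recl big_ord0 /=.
by rewrite QTmul_coef1 QT1_coef1 QT1_coef0 L0 !divr1; ring.
Qed.

Lemma big_QTmul_coef k (F : 'I_k -> QT n) x : (forall j, F j mset0 = 1) ->
  (\big[@QTmul n/QT1 n]_(i < k) F i) mset0 = 1 /\
  (\big[@QTmul n/QT1 n]_(i < k) F i) [mset x] = \sum_(i < k) F i [mset x].
Proof.
move=> F0; apply: (big_rec2 (fun P s => P mset0 = 1 /\ P [mset x] = s)).
  by rewrite QT1_coef0 QT1_coef1.
move=> i P s _ [P0 P1]; rewrite QTmul_coef0 QTmul_coef1 F0 P0 P1.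
by split; ring.
Qed.

Lemma big_QTmul_zpow_exp_coef k (c : 'I_k -> int) (L : 'I_k -> QT n) x :
    (forall j, L j mset0 = 0) ->
  (\big[@QTmul n/QT1 n]_(i < k) QTzpow (QTexp (L i)) (c i)) mset0 = 1 /\
  (\big[@QTmul n/QT1 n]_(i < k) QTzpow (QTexp (L i)) (c i)) [mset x]
    = \sum_(i < k) (c i)%:~R * L i [mset x].
Proof.
move=> L0; have F0 j : QTzpow (QTexp (L j)) (c j) mset0 = 1.
  exact/QTzpow_coef0/QTexp_coef0.
have [-> ->] := big_QTmul_coef (F := fun i => QTzpow (QTexp (L i)) (c i)) x F0.
split=> //; apply: eq_bigr => i _.
by rewrite QTzpow_coef1 ?QTexp_coef0 // QTexp_coef1.
Qed.

Lemma QTmul_eq1_coef1 f g x : QTmul f g = QT1 n ->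
  f mset0 = 1 -> g mset0 = 1 -> f [mset x] + g [mset x] = 0.
Proof.
move=> fg1 f0 g0; have := congr1 (fun h => h [mset x]) fg1.
by rewrite /= QTmul_coef1 QT1_coef1 f0 g0 mul1r mulr1 addrC.
Qed.

Lemma tvar_coef0 (i : 'I_n) : tvar i mset0 = 0.
Proof. by rewrite /tvar eq_sym (negbTE (mset1_neq0 _)). Qed.

Lemma tvar_coef1 (i : 'I_n) x : tvar i [mset x] = (x == inl i)%:R.
Proof. by rewrite /tvar mset1_eq. Qed.

Lemma sum_tvar_coef1_inl (c : 'I_n -> rat) (k : 'I_n) :
  \sum_(i < n) c i * tvar i [mset inl k] = c k.
Proof.
rewrite (bigD1 k) //= tvar_coef1 eqxx mulr1 big1 ?addr0 // => i ik.
by rewrite tvar_coef1 (inj_eq inl_inj) eq_sym (negbTE ik) mulr0.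
Qed.

Lemma tlin_coef0 F : tlin F mset0 = 0.
Proof. by rewrite /tlin enum_mset0. Qed.

Lemma tlin_inl F (i : 'I_n) : tlin F [mset (inl i : tsym n)] = 0.
Proof. by rewrite /tlin enum_msetn. Qed.

Lemma tlin_inr F (a b : nmono n) :
  tlin F [mset (inr (a, b) : tsym n)] = F (Some a, Some b).
Proof. by rewrite /tlin enum_msetn. Qed.

End PowerSeriesCoefficients.

Section Grouplike.
Variable n : nat.

Definition aug (g : QX n) : QX n := fun u => g u - QX1 n u.

Lemma mdeg_gt0 (a : nmono n) : (0 < mdeg a)%N.
Proof. by elim: a => //= a IHa b _; rewrite addn_gt0 IHa. Qed.

Lemma grouplike_QX1 : grouplike (QX1 n).
Proof.
split=> // u v; case: u v => [a|] [b|].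
4: by rewrite /Delta /= big_seq1 mul1r.
all: rewrite /Delta /omonos ifN /= ?addn0 -?lt0n ?addn_gt0 ?mdeg_gt0 //.
all: by rewrite big_map big1 ?mulr0 ?mul0r // => w _; rewrite mul0r.
Qed.

Lemma Delta_lin m (a : 'I_m -> rat) (G : 'I_m -> QX n) (f : QX n) :
    (forall w, \sum_(j < m) a j * G j w = f w) ->
  forall uv, \sum_(j < m) a j * Delta (G j) uv = Delta f uv.
Proof.
move=> aGf uv; rewrite /Delta; under eq_bigr do rewrite big_distrr.
rewrite exchange_big; apply: eq_bigr => w _; rewrite -aGf big_distrl.
by apply: eq_bigr => j _; rewrite /= mulrA.
Qed.

Lemma DeltaZ c (f : QX n) uv : Delta (fun w => c * f w) uv = c * Delta f uv.
Proof.
by rewrite /Delta big_distrr; apply: eq_bigr => w _; rewrite /= mulrA.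
Qed.

Section LinearRelation.
Variables (m : nat) (a : 'I_m -> rat) (G : 'I_m -> QX n).
Hypothesis G_grouplike : forall j, grouplike (G j).
Hypothesis aug_rel : forall u, \sum_(j < m) a j * aug (G j) u = 0.

(* The coproduct of [\sum_j a j * G j = (\sum_j a j) * 1]. *)
Lemma sum_aug_mul_aug u v :
  \sum_(j < m) a j * aug (G j) u * aug (G j) v = 0.
Proof.
set A := \sum_(j < m) a j.
have aG w : \sum_(j < m) a j * G j w = A * QX1 n w.
  apply/eqP; rewrite -subr_eq0 -[X in _ == X](aug_rel w) mulr_suml -sumrB.
  by apply/eqP/eq_bigr => j _; rewrite mulrBr.
have aGG : \sum_(j < m) a j * G j u * G j v = A * QX1 n u * QX1 n v.
  rewrite -mulrA -grouplike_QX1.2 -DeltaZ -(Delta_lin aG (u, v)).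
  by apply: eq_bigr => j _; rewrite (G_grouplike j).2 mulrA.
have -> : \sum_(j < m) a j * aug (G j) u * aug (G j) v =
    \sum_(j < m) a j * G j u * G j v - QX1 n v * \sum_(j < m) a j * G j u
    - QX1 n u * \sum_(j < m) a j * G j v + QX1 n u * QX1 n v * A.
  rewrite !mulr_sumr -!sumrB -big_split /=.
  by apply: eq_bigr => j _; rewrite /aug; ring.
by rewrite aGG !aG; ring.
Qed.

Lemma sum_shift_aug k u v :
  \sum_(j < m) a j * (G j u - G k u) * aug (G j) v = 0.
Proof.
have -> : \sum_(j < m) a j * (G j u - G k u) * aug (G j) v =
    \sum_(j < m) a j * aug (G j) u * aug (G j) v
    - aug (G k) u * \sum_(j < m) a j * aug (G j) v.
  by rewrite mulr_sumr -sumrB; apply: eq_bigr => j _; rewrite /aug; ring.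
by rewrite sum_aug_mul_aug aug_rel mulr0 subr0.
Qed.

End LinearRelation.

Definition aug_tensor_rel m (d : 'I_m -> rat) (G G' : 'I_m -> QX n) : Prop :=
  forall u v, \sum_(j < m) d j * aug (G j) u * aug (G' j) v = 0.

Lemma aug_tensor_rel_swap m d (G G' : 'I_m -> QX n) :
  aug_tensor_rel d G G' -> aug_tensor_rel d G' G.
Proof.
by move=> R u v; rewrite -[RHS](R v u); apply: eq_bigr => j _; rewrite mulrAC.
Qed.

Lemma aug_tensor_rel_shift0 m d (G G' : 'I_m.+1 -> QX n) u1 :
    (forall j, grouplike (G j)) -> aug_tensor_rel d G G' ->
  aug_tensor_rel (fun i => d (lift ord0 i) * (G (lift ord0 i) u1 - G ord0 u1))
    (fun i => G (lift ord0 i)) (fun i => G' (lift ord0 i)).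
Proof.
move=> gl R u v.
have Rv w : \sum_(j < m.+1) d j * aug (G' j) v * aug (G j) w = 0.
  by rewrite -[RHS](R w v); apply: eq_bigr => j _; rewrite mulrAC.
rewrite -[RHS](sum_shift_aug gl Rv ord0 u1 u) big_ord_recl subrr.
rewrite mulr0 mul0r add0r.
by apply: eq_bigr => i _; ring.
Qed.

Lemma aug_neq0 (g : QX n) : g <> QX1 n -> exists u, aug g u != 0.
Proof.
move=> g_neq1; apply: NNPP => aug0; apply/g_neq1/functional_extensionality => u.
apply/eqP; rewrite -subr_eq0; apply/negPn/negP => gu.
exact: aug0 (ex_intro _ u gu).
Qed.

Lemma aug_tensor1_eq0 c (g g' : QX n) : g <> QX1 n -> g' <> QX1 n ->
  (forall u v, c * aug g u * aug g' v = 0) -> c = 0.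
Proof.
move=> /aug_neq0 [u gu] /aug_neq0 [v gv] /(_ u v) /eqP.
by rewrite !mulf_eq0 (negbTE gu) (negbTE gv) !orbF => /eqP.
Qed.

Lemma aug_tensor_rel_eq0 m (d : 'I_m -> rat) (G G' : 'I_m -> QX n) :
    (forall j, grouplike (G j) /\ G j <> QX1 n) ->
    (forall j, grouplike (G' j) /\ G' j <> QX1 n) ->
    (forall j k, j != k -> (G j, G' j) <> (G k, G' k)) ->
  aug_tensor_rel d G G' -> forall j, d j = 0.
Proof.
elim: m d G G' => [|m IH] d G G' hG hG' hGG' R; first by case.
have IHl d' : aug_tensor_rel d' (fun i => G (lift ord0 i))
    (fun i => G' (lift ord0 i)) -> forall i, d' i = 0.
  apply: IH => [i|i|i k ik]; [exact: hG | exact: hG' | apply: hGG'].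
  by rewrite (inj_eq lift_inj).
have lift_eq i u : d (lift ord0 i) != 0 ->
    G (lift ord0 i) u = G ord0 u /\ G' (lift ord0 i) u = G' ord0 u.
  move=> nz; split; apply/eqP; rewrite -subr_eq0.
    have := IHl _ (aug_tensor_rel_shift0 u (fun j => (hG j).1) R) i.
    by move/eqP; rewrite mulf_eq0 (negbTE nz).
  have R' := aug_tensor_rel_swap R.
  have := IHl _ (aug_tensor_rel_swap
                   (aug_tensor_rel_shift0 u (fun j => (hG' j).1) R')) i.
  by move/eqP; rewrite mulf_eq0 (negbTE nz).
have dl i : d (lift ord0 i) = 0.
  apply/eqP/negP => /negP nz; apply: (hGG' (lift ord0 i) ord0).
    by rewrite eq_sym neq_lift.
  by congr pair; apply: functional_extensionality => u; case: (lift_eq i u nz).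
have d0 : d ord0 = 0.
  apply: (aug_tensor1_eq0 (hG ord0).2 (hG' ord0).2) => u v.
  rewrite -[RHS](R u v) big_ord_recl big1 ?addr0 // => i _.
  by rewrite dl !mul0r.
by move=> j; case: (unliftP ord0 j) => [i ->|->].
Qed.

Lemma aug_tensor_rel_tlin m (d : 'I_m -> rat) (G G' : 'I_m -> QX n) :
    (forall j, counit (G j) = 1) -> (forall j, counit (G' j) = 1) ->
    (forall a b, \sum_(j < m) d j * tlin (tens (G j) (G' j))
                   [mset (inr (a, b) : tsym n)] = 0) ->
  aug_tensor_rel d G G'.
Proof.
move=> G1 G'1 dt [a|] [b|]; last 3 first.
- by rewrite big1 // => j _; rewrite /aug /= -/(counit _) G'1 subrr mulr0.
- by rewrite big1 // => j _; rewrite /aug /= -/(counit _) G1 subrr mulr0 mul0r.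
- by rewrite big1 // => j _; rewrite /aug /= -/(counit _) G1 subrr mulr0 mul0r.
rewrite -[RHS](dt a b); apply: eq_bigr => j _.
by rewrite tlin_inr /tens /aug /= !subr0 mulrA.
Qed.

End Grouplike.

Theorem lemma5p2 (n m : nat) (e : 'I_n -> int) (d : 'I_m -> int)
    (g g' : 'I_m -> QX n) :
  (forall j, grouplike (g j) /\ g j <> QX1 n) ->
  (forall j, grouplike (g' j) /\ g' j <> QX1 n) ->
  (forall j k : 'I_m, j != k -> (g j, g' j) <> (g k, g' k)) ->
  QTmul (\big[@QTmul n/QT1 n]_(i < n) QTzpow (QTexp (tvar i)) (e i))
        (\big[@QTmul n/QT1 n]_(j < m) QTzpow (tstar (g j) (g' j)) (d j))
    = QT1 n ->
  (forall i, e i = 0%R) /\ (forall j, d j = 0%R).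
Proof.
rewrite /tstar => hg hg' hgg' prod1.
have coef1 x : \sum_(i < n) (e i)%:~R * tvar i [mset x]
    + \sum_(j < m) (d j)%:~R * tlin (tens (g j) (g' j)) [mset x] = 0.
  have [A0 <-] := big_QTmul_zpow_exp_coef e x (@tvar_coef0 n).
  have [B0 <-] := big_QTmul_zpow_exp_coef d
    (L := fun j => tlin (tens (g j) (g' j))) x (fun j => tlin_coef0 _).
  exact: QTmul_eq1_coef1 prod1 A0 B0.
split=> [i|].
  apply/eqP; rewrite -(intr_eq0 rat); apply/eqP.
  rewrite -(sum_tvar_coef1_inl (fun k => (e k)%:~R)) -[RHS](coef1 (inl i)).
  rewrite [X in _ + X]big1 ?addr0 // => j _.
  by rewrite tlin_inl mulr0.
have R : aug_tensor_rel (fun j => (d j)%:~R) g g'.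
  apply: aug_tensor_rel_tlin => [j|j|a b]; first exact: (hg j).1.1.
    exact: (hg' j).1.1.
  rewrite -[RHS](coef1 (inr (a, b))) [X in X + _]big1 ?add0r // => i _.
  by rewrite tvar_coef1 mulr0.
move=> j; apply/eqP; rewrite -(intr_eq0 rat); apply/eqP.
exact: aug_tensor_rel_eq0 hg hg' hgg' R j.
Qed.
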